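(* The logic $\mathsf{F}(\mathrm{LTL}[\mathsf{O}])$ can be exponentially more succinct than $\mathrm{LTL}[\mathsf{X},\mathsf{wX},\mathsf{F},\mathsf{G}]$ (over finite traces). That is, there exist finite sets of atomic propositions $AP_n$ and languages $\mathcal{L}_n \subseteq (2^{AP_n})^+$, $n \geq 1$, such that for every $n\ge 1$: (i) there is a formula $\phi \in \mathsf{F}(\mathrm{LTL}[\mathsf{O}])$ with $\mathcal{L}(\phi)=\mathcal{L}_n$ and $\mathrm{size}(\phi)$ bounded by a polynomial in $n$; and (ii) every formula $\psi\in \mathrm{LTL}[\mathsf{X},\mathsf{wX},\mathsf{F},\mathsf{G}]$ with $\mathcal{L}(\psi)=\mathcal{L}_n$ has $\mathrm{size}(\psi) \in 2^{\Omega(n)}$.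
   Context: Let $AP$ be a finite set of atomic propositions and $\Sigma=2^{AP}$. Formulae (in negation normal form) are generated by $\phi ::= p \mid \neg p \mid \phi\lor\phi\mid\phi\land\phi\mid \mathsf{X}\phi\mid\mathsf{wX}\phi\mid\mathsf{F}\phi\mid\mathsf{G}\phi\mid\mathsf{Y}\phi\mid\mathsf{wY}\phi\mid\mathsf{O}\phi\mid\mathsf{H}\phi$ with $p\in AP$. For a finite non-empty trace $\sigma=w_0\cdots w_m\in\Sigma^+$ (so $|\sigma|=m+1$, $\sigma[i]=w_i$) and a position $0\le i<|\sigma|$: $\sigma,i\models p$ iff $p\in\sigma[i]$; $\sigma,i\models\neg p$ iff $p\notin\sigma[i]$; $\lor,\land$ as usual; $\sigma,i\models\mathsf{X}\phi$ iff $i+1<|\sigma|$ and $\sigma,i+1\models\phi$; $\sigma,i\models\mathsf{wX}\phi$ iff $i+1=|\sigma|$ or $\sigma,i+1\models\phi$; $\sigma,i\models\mathsf{F}\phi$ iff $\sigma,j\models\phi$ for some $i\le j<|\sigma|$; $\sigma,i\models\mathsf{G}\phi$ iff $\sigma,j\models\phi$ for all $i\le j<|\sigma|$; $\sigma,i\models\mathsf{Y}\phi$ iff $i>0$ and $\sigma,i-1\models\phi$; $\sigma,i\models\mathsf{wY}\phi$ iff $i=0$ or $\sigma,i-1\models\phi$; $\sigma,i\models\mathsf{O}\phi$ iff $\sigma,j\models\phi$ for some $0\le j\le i$; $\sigma,i\models\mathsf{H}\phi$ iff $\sigma,j\models\phi$ for all $0\le j\le i$. $\sigma\models\phi$ means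 $\sigma,0\models\phi$, and $\mathcal{L}(\phi)=\{\sigma\in\Sigma^+:\sigma\models\phi\}$. Size: $\mathrm{size}(p)=\mathrm{size}(\neg p)=1$, $\mathrm{size}(\circ\phi)=\mathrm{size}(\phi)+1$ for each unary temporal operator $\circ$, $\mathrm{size}(\phi_1\circ\phi_2)=\mathrm{size}(\phi_1)+\mathrm{size}(\phi_2)+1$ for $\circ\in\{\land,\lor\}$. For a set $S$ of temporal operators, $\mathrm{LTL}[S]$ is the set of formulae all of whose temporal operators lie in $S$, and $\mathsf{F}(\mathrm{LTL}[S])$ is the set of formulae of the form $\mathsf{F}(\alpha)$ with $\alpha\in\mathrm{LTL}[S]$. *)

From mathcomp Require Import all_boot.
Set Implicit Arguments. Unset Strict Implicit. Unset Printing Implicit Defensive.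

Inductive top := oX | owX | oF | oG | oY | owY | oO | oH.

Inductive formula (A : Type) :=
| Atom of A
| NAtom of A
| Or of formula A & formula A
| And of formula A & formula A
| Tmp of top & formula A.

Arguments Atom {A}. Arguments NAtom {A}.

Fixpoint fsize (A : Type) (phi : formula A) : nat :=
  match phi with
  | Atom _ | NAtom _ => 1
  | Or p q | And p q => fsize p + fsize q + 1
  | Tmp _ p => fsize p + 1
  end.

Fixpoint sat (A : finType) (s : seq {set A}) (phi : formula A) (i : nat) : bool :=
  match phi with
  | Atom p => p \in nth set0 s i
  | NAtom p => p \notin nth set0 s i
  | Or p q => sat s p i || sat s q i
  | And p q => sat s p i && sat s q i
  | Tmp oX p => (i.+1 < size s) && sat s p i.+1
  | Tmp owX p => (i.+1 == size s) || sat s p i.+1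
  | Tmp oF p => [exists j : 'I_(size s), (i <= j) && sat s p j]
  | Tmp oG p => [forall j : 'I_(size s), (i <= j) ==> sat s p j]
  | Tmp oY p => (0 < i) && sat s p i.-1
  | Tmp owY p => (i == 0) || sat s p i.-1
  | Tmp oO p => [exists j : 'I_(size s), (j <= i) && sat s p j]
  | Tmp oH p => [forall j : 'I_(size s), (j <= i) ==> sat s p j]
  end.

Definition models (A : finType) (s : seq {set A}) (phi : formula A) : bool :=
  sat s phi 0.

Definition defines (A : finType) (phi : formula A) (L : seq {set A} -> Prop) : Prop :=
  forall s : seq {set A}, s <> [::] -> (models s phi <-> L s).

Fixpoint in_LTL (A : Type) (S : pred top) (phi : formula A) : bool :=
  match phi with
  | Atom _ | NAtom _ => true
  | Or p q | And p q => in_LTL S p && in_LTL S q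
  | Tmp o p => S o && in_LTL S p
  end.

Definition in_F_LTL (A : Type) (S : pred top) (phi : formula A) : bool :=
  match phi with
  | Tmp oF alpha => in_LTL S alpha
  | _ => false
  end.

Definition S_O : pred top := fun o => if o is oO then true else false.
Definition S_XwXFG : pred top := fun o =>
  match o with oX | owX | oF | oG => true | _ => false end.

From HB Require Import structures.
From mathcomp Require Import all_boot zify.
Set Implicit Arguments. Unset Strict Implicit. Unset Printing Implicit Defensive.

(* The witness phi_n = F (c /\ /\_i ((~ x_i \/ O p_i) /\ (x_i \/ O q_i))) has size
   O(n).  At a c-position it states that the valuation of x_1 .. x_n is the set A
   encoded by the p's and q's of position 0, which O looks back to; so the trace
   A . {} . X_1 ... X_k satisfies phi_n iff A is among the X_j.
   A formula psi of LTL[X,wX,F,G] only looks forward: at a position inside u, its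
   truth on u ++ v depends on v only through the truth values at position 0 of v
   of the fsize psi subformulas of psi.  If psi defines the language of phi_n,
   these values determine {X_1, .., X_k}, an arbitrary family of subsets of an
   n-element set, so 2^(2^n) <= 2^(fsize psi). *)

Fixpoint subformulas (A : Type) (phi : formula A) : seq (formula A) :=
  phi :: match phi with
         | Or p q | And p q => subformulas p ++ subformulas q
         | Tmp _ p => subformulas p
         | _ => [::]
         end.

Lemma size_subformulas (A : Type) (phi : formula A) :
  size (subformulas phi) = fsize phi.
Proof.
by elim: phi => //= [p IHp q IHq|p IHp q IHq|o p IHp]; rewrite ?size_cat; lia.
Qed.

Lemma card_set (T : finType) : #|{: {set T}}| = 2 ^ #|T|.
Proof. by rewrite -[#|T|]cardsT -card_powerset powersetT cardsT. Qed.

Section Traces.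

Variable T : finType.
Implicit Types (s u v : seq {set T}) (phi p : formula T).

Lemma satF_iota s p i :
  sat s (Tmp oF p) i = has (sat s p) (iota i (size s - i)).
Proof.
apply/existsP/hasP => [[j /andP[le_ij sat_j]] | [k]].
  by exists (nat_of_ord j); rewrite // mem_iota; have := ltn_ord j; lia.
rewrite mem_iota => /andP[le_ik lt_k] sat_k.
have lt_ks : k < size s by lia.
by exists (Ordinal lt_ks); rewrite /= le_ik.
Qed.

Lemma satG_iota s p i :
  sat s (Tmp oG p) i = all (sat s p) (iota i (size s - i)).
Proof.
apply/forallP/allP => [sat_ge k | sat_in j].
  rewrite mem_iota => /andP[le_ik lt_k].
  have lt_ks : k < size s by lia.
  by have := sat_ge (Ordinal lt_ks); rewrite /= le_ik.
by apply/implyP => le_ij; apply: sat_in; rewrite mem_iota; have := ltn_ord j; lia.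
Qed.

Lemma satF_has s p (P : pred {set T}) :
  (forall j, sat s p j = P (nth set0 s j)) -> sat s (Tmp oF p) 0 = has P s.
Proof.
move=> sat_p; rewrite satF_iota subn0 -[in RHS](mkseq_nth set0 s) has_map.
exact: eq_has.
Qed.

Lemma sat_once_head s a j : (forall l, l \in behead s -> a \notin l) ->
  sat s (Tmp oO (Atom a)) j = (a \in nth set0 s 0).
Proof.
move=> not_later; apply/existsP/idP => [[k /andP[_]] | a_head].
  case: s not_later k => [|l s] not_later [[|k] lt_k] //= a_k.
  by rewrite (negbTE (not_later _ (mem_nth set0 (lt_k : k < size s)))) in a_k.
case: s not_later a_head => [_ | l s _ a_head]; first by rewrite inE.
by exists ord0.
Qed.

Lemma sat_cat_shift u v phi j : in_LTL S_XwXFG phi ->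
  sat (u ++ v) phi (size u + j) = sat v phi j.
Proof.
elim: phi j => [a|a|p IHp q IHq|p IHp q IHq|o p IHp] j fut.
1,2: by rewrite /= nth_cat ltnNge leq_addr addKn.
1,2: by case/andP: fut => fp fq; rewrite /= IHp ?IHq.
case/andP: fut; case: o => // _ fp.
- by rewrite /= size_cat -addnS ltn_add2l IHp.
- by rewrite /= size_cat -addnS eqn_add2l IHp.
- rewrite (satF_iota (u ++ v)) (satF_iota v) size_cat subnDl iotaDl has_map.
  by apply: eq_has => k /=; rewrite IHp.
- rewrite (satG_iota (u ++ v)) (satG_iota v) size_cat subnDl iotaDl all_map.
  by apply: eq_all => k /=; rewrite IHp.
Qed.

Lemma satF_cat u v p i : in_LTL S_XwXFG p -> i <= size u ->
  sat (u ++ v) (Tmp oF p) i =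
  has (sat (u ++ v) p) (iota i (size u - i)) || sat v (Tmp oF p) 0.
Proof.
move=> fp le_iu; rewrite !satF_iota size_cat subn0.
have -> : size u + size v - i = (size u - i) + size v by lia.
rewrite iotaD has_cat subnKC // -[size u]addn0 iotaDl has_map.
by congr (_ || _); apply: eq_has => k /=; rewrite sat_cat_shift.
Qed.

Lemma satG_cat u v p i : in_LTL S_XwXFG p -> i <= size u ->
  sat (u ++ v) (Tmp oG p) i =
  all (sat (u ++ v) p) (iota i (size u - i)) && sat v (Tmp oG p) 0.
Proof.
move=> fp le_iu; rewrite !satG_iota size_cat subn0.
have -> : size u + size v - i = (size u - i) + size v by lia.
rewrite iotaD all_cat subnKC // -[size u]addn0 iotaDl all_map.
by congr (_ && _); apply: eq_all => k /=; rewrite sat_cat_shift.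
Qed.

Definition profile v phi : seq bool := [seq sat v c 0 | c <- subformulas phi].

Lemma profile_cat v1 v2 p q :
  profile v1 p ++ profile v1 q = profile v2 p ++ profile v2 q ->
  profile v1 p = profile v2 p /\ profile v1 q = profile v2 q.
Proof. by move/eqP; rewrite eqseq_cat ?size_map // => /andP[/eqP-> /eqP->]. Qed.

Lemma sat_cat_congr u v1 v2 phi :
  0 < size v1 -> 0 < size v2 -> in_LTL S_XwXFG phi ->
  profile v1 phi = profile v2 phi ->
  forall i, i <= size u -> sat (u ++ v1) phi i = sat (u ++ v2) phi i.
Proof.
move=> v1_gt0 v2_gt0.
have at_boundary psi : in_LTL S_XwXFG psi -> sat v1 psi 0 = sat v2 psi 0 ->
    sat (u ++ v1) psi (size u) = sat (u ++ v2) psi (size u).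
  by move=> fut; rewrite -[size u]addn0 !sat_cat_shift.
elim: phi => [a|a|p IHp q IHq|p IHp q IHq|o p IHp] fut [same_phi].
1,2: move=> i; rewrite leq_eqVlt => /predU1P[-> | lt_iu];
  [exact: at_boundary | by rewrite /= !nth_cat lt_iu].
1,2: rewrite !map_cat => /profile_cat[same_p same_q] i le_iu;
  by case/andP: fut => fp fq; rewrite /= (IHp fp) ?(IHq fq).
move=> same_p i; have /andP[_ fp] := fut.
rewrite leq_eqVlt => /predU1P[-> | lt_iu]; first exact: at_boundary.
have IH j : j <= size u -> sat (u ++ v1) p j = sat (u ++ v2) p j by exact: IHp.
case: o fut same_phi => // _ same_phi.
- have [lt1 lt2] : i.+1 < size (u ++ v1) /\ i.+1 < size (u ++ v2).
    by rewrite !size_cat; lia.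
  by rewrite /= lt1 lt2 IH.
- have [ne1 ne2] : i.+1 != size (u ++ v1) /\ i.+1 != size (u ++ v2).
    by rewrite !size_cat; lia.
  by rewrite /= (negbTE ne1) (negbTE ne2) IH.
- rewrite !satF_cat ?(ltnW lt_iu) //; congr (_ || _); last exact: same_phi.
  by apply: eq_in_has => k; rewrite mem_iota => /andP[_ lt_k]; apply: IH; lia.
- rewrite !satG_cat ?(ltnW lt_iu) //; congr (_ && _); last exact: same_phi.
  by apply: eq_in_all => k; rewrite mem_iota => /andP[_ lt_k]; apply: IH; lia.
Qed.

Lemma card_le_exp_fsize (I : finType) (v : I -> seq {set T}) psi :
  in_LTL S_XwXFG psi -> (forall x, 0 < size (v x)) ->
  (forall x y, (forall u, models (u ++ v x) psi = models (u ++ v y) psi) -> x = y) ->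
  #|I| <= 2 ^ fsize psi.
Proof.
move=> fut v_gt0 separated.
pose profile_tuple x := map_tuple (fun c => sat (v x) c 0) (in_tuple (subformulas psi)).
have profile_inj : injective profile_tuple.
  move=> x y /(congr1 val) same; apply: separated => u.
  exact: (sat_cat_congr (v_gt0 x) (v_gt0 y) fut same (leq0n (size u))).
by rewrite -size_subformulas -card_bool -card_tuple; apply: leq_card profile_inj.
Qed.

End Traces.

Inductive ap (n : nat) := Pc | Pp of 'I_n | Pq of 'I_n | Px of 'I_n.

Definition ap_code n (t : ap n) : option ('I_n + 'I_n + 'I_n) :=
  match t with
  | Pc => None
  | Pp i => Some (inl (inl i))
  | Pq i => Some (inl (inr i))
  | Px i => Some (inr i)
  end.

Definition ap_decode n (c : option ('I_n + 'I_n + 'I_n)) : ap n :=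
  match c with
  | None => Pc n
  | Some (inl (inl i)) => Pp i
  | Some (inl (inr i)) => Pq i
  | Some (inr i) => Px i
  end.

Lemma ap_codeK n : cancel (@ap_code n) (@ap_decode n).
Proof. by case. Qed.

HB.instance Definition _ n := Finite.copy (ap n) (can_type (@ap_codeK n)).

Section Family.

Variable n : nat.
Local Notation AP := 'I_#|{: ap n}|.
Local Notation letter := {set AP}.
Implicit Types (A X : {set 'I_n}) (G : {set {set 'I_n}}).

Definition clause (i : 'I_n) : formula AP :=
  And (Or (NAtom (enum_rank (Px i))) (Tmp oO (Atom (enum_rank (Pp i)))))
      (Or (Atom (enum_rank (Px i))) (Tmp oO (Atom (enum_rank (Pq i))))).

Definition alpha : formula AP :=
  foldr (fun i acc => And (clause i) acc) (Atom (enum_rank (Pc n))) (enum 'I_n).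

Definition phi : formula AP := Tmp oF alpha.

Lemma phi_in_F_LTL_O : in_F_LTL S_O phi.
Proof. by rewrite /phi /= /alpha; elim: (enum 'I_n) => //= i l ->. Qed.

Lemma fsize_phi : fsize phi = 10 * n + 2.
Proof.
rewrite /= /alpha -[in RHS](size_enum_ord n).
by elim: (enum 'I_n) => //= i l IH; lia.
Qed.

Lemma sat_clause s i j : sat s (clause i) j =
  (~~ (enum_rank (Px i) \in nth set0 s j) || sat s (Tmp oO (Atom (enum_rank (Pp i)))) j) &&
  ((enum_rank (Px i) \in nth set0 s j) || sat s (Tmp oO (Atom (enum_rank (Pq i)))) j).
Proof. by []. Qed.

Lemma sat_alpha s j : sat s alpha j =
  (enum_rank (Pc n) \in nth set0 s j) && all (fun i => sat s (clause i) j) (enum 'I_n).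
Proof.
rewrite /alpha; elim: (enum 'I_n) => /= [|i l ->]; first by rewrite andbT.
by rewrite andbCA.
Qed.

Definition letter_of (P : pred (ap n)) : letter := [set a | P (enum_val a)].

Lemma in_letter_of P t : (enum_rank t \in letter_of P) = P t.
Proof. by rewrite inE enum_rankK. Qed.

Definition prefix_letter A : letter :=
  letter_of (fun t => match t with Pp i => i \in A | Pq i => i \notin A | _ => false end).

Definition suffix_letter X : letter :=
  letter_of (fun t => match t with Pc => true | Px i => i \in X | _ => false end).

(* The empty letter keeps the suffix non-empty when G is empty. *)
Definition suffix G : seq letter := set0 :: map suffix_letter (enum G).

Definition trace A G : seq letter := prefix_letter A :: suffix G.

Lemma suffix_letter_inj : injective suffix_letter.
Proof.
move=> X Y /setP same; apply/setP => i.
by have := same (enum_rank (Px i)); rewrite !in_letter_of.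
Qed.

Lemma neq_suffix_letter (l : letter) X :
  enum_rank (Pc n) \notin l -> (l == suffix_letter X) = false.
Proof. by apply: contraNF => /eqP->; rewrite in_letter_of. Qed.

Lemma mem_suffix G l : l \in suffix G -> l = set0 \/ exists X, l = suffix_letter X.
Proof. by rewrite inE => /predU1P[-> | /mapP[X _ ->]]; [left | right; exists X]. Qed.

Lemma sat_once_trace A G t j : (forall X, enum_rank t \notin suffix_letter X) ->
  sat (trace A G) (Tmp oO (Atom (enum_rank t))) j = (enum_rank t \in prefix_letter A).
Proof.
move=> not_suffix; apply: sat_once_head => l /mem_suffix[-> | [X ->]] //.
by rewrite inE.
Qed.

Lemma sat_clause_trace A G i j :
  sat (trace A G) (clause i) j = ((enum_rank (Px i) \in nth set0 (trace A G) j) == (i \in A)).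
Proof.
rewrite sat_clause !sat_once_trace => [| X | X]; rewrite ?in_letter_of //=.
by case: (i \in A); case: (enum_rank (Px i) \in _).
Qed.

Lemma mem_nth_trace A G j : nth set0 (trace A G) j \in trace A G.
Proof.
have [lt_j | le_j] := ltnP j (size (trace A G)); first exact: mem_nth.
by rewrite nth_default // !inE eqxx orbT.
Qed.

Lemma sat_alpha_trace A G j :
  sat (trace A G) alpha j = (nth set0 (trace A G) j == suffix_letter A).
Proof.
rewrite sat_alpha; under eq_all do rewrite sat_clause_trace.
move: (mem_nth_trace A G j); set l := nth _ _ _.
rewrite inE => /predU1P[-> | /mem_suffix[-> | [X ->]]].
- by rewrite neq_suffix_letter in_letter_of.
- by rewrite neq_suffix_letter inE.
rewrite in_letter_of (inj_eq suffix_letter_inj) /=.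
under eq_all do rewrite in_letter_of /=.
apply/allP/eqP => [same | -> i _]; last by rewrite eqxx.
by apply/setP => i; apply/eqP/same; rewrite mem_enum.
Qed.

Lemma models_trace A G : models (trace A G) phi = (A \in G).
Proof.
rewrite /models /phi (@satF_has _ _ _ (pred1 (suffix_letter A))); last exact: sat_alpha_trace.
rewrite has_pred1 !inE ![suffix_letter A == _]eq_sym !neq_suffix_letter ?in_letter_of ?inE //=.
by rewrite (mem_map suffix_letter_inj) mem_enum.
Qed.

End Family.

Lemma models_trace_defining n psi A G :
  defines psi (fun s => models s (phi n)) -> models (trace A G) psi = (A \in G).
Proof.
move=> psi_def; rewrite -models_trace.
have /psi_def trace_iff : trace A G <> [::] by [].
by apply/idP/idP => /trace_iff.
Qed.

Theorem theorem1 :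
  exists (m : nat -> nat) (L : forall n : nat, seq {set 'I_(m n)} -> Prop),
    (* (i) polynomial-size F(LTL[O]) formulae *)
    (exists c k : nat, forall n : nat, 1 <= n ->
       exists phi : formula 'I_(m n),
         in_F_LTL S_O phi /\ defines phi (L n) /\ fsize phi <= c * n ^ k) /\
    (* (ii) every LTL[X,wX,F,G] formula for L n has size 2^Omega(n) *)
    (exists d N : nat, forall n : nat, N <= n ->
       forall psi : formula 'I_(m n),
         in_LTL S_XwXFG psi -> defines psi (L n) -> 2 ^ n <= fsize psi ^ d).
Proof.
exists (fun n => #|{: ap n}|), (fun n s => models s (phi n)); split.
  exists 12, 1 => n n_gt0; exists (phi n); split; first exact: phi_in_F_LTL_O.
  by split=> //; rewrite fsize_phi expn1; lia.
exists 1, 0 => n _ psi psi_future psi_def.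
have card_sets : #|{: {set {set 'I_n}}}| = 2 ^ 2 ^ n by rewrite !card_set card_ord.
rewrite expn1 -(@leq_exp2l 2) // -card_sets.
apply: (card_le_exp_fsize (v := @suffix n)) => // G1 G2 same_models.
apply/setP => A; rewrite -!(models_trace_defining A _ psi_def).
exact: same_models [:: prefix_letter A].
Qed.
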